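(* Let $(X,d)$ be a geometrically doubling metric space, $E\subseteq X$, $m\in\mathbb{Z}$, and $0<b_0\le B_0<\infty$, $\delta\in(0,1)$ with $12B_0\delta\le b_0$. Let $\{x^k_\alpha\}_{k\in\mathbb{Z},\alpha}$ be points of $X$ satisfying: (1) for all $k\in\mathbb{Z}$: $d(x^k_\alpha,x^k_\beta)\ge b_0\delta^k$ for $\alpha\ne\beta$, and $\min_\alpha d(x,x^k_\alpha)<B_0\delta^k$ for all $x\in X$; (2) for all $k\ge m$ and both $F\in\{E,X\setminus E\}$: $\min_{\alpha: x^k_\alpha\in F} d(x,x^k_\alpha)<B_0\delta^k$ for all $x\in F$; (3) for all $k\ge m$ and both $F\in\{E,X\setminus E\}$: $\operatorname{dist}(x^k_\alpha,X\setminus F)\ge b_0\delta^k$ whenever $x^k_\alpha\in F$; (4) there is exactly one index $\alpha_0$ with $x^m_{\alpha_0}\in E$. Let $\le$ be a dyadic partial order on the index pairs (with $c_0=b_0$, $C_0=B_0$) such that whenever $k\ge m$ and $(\ell,\beta)\le(k,\alpha)$, the points $x^\ell_\beta$ and $x^k_\alpha$ lie in the same set $F\in\{E,X\setminus E\}$. For each $\alpha$ define $\bar Q^m_\alpha=\overline{\{x^\ell_\beta:(\ell,\beta)\le(m,\alpha)\}}$ and $\tilde Q^m_{\alpha_0}=X\setminus\bigcup_{\gamma\ne\alpha_0}\bar Q^m_\gamma$. Then $\tilde Q^m_{\alpha_0}\subseteq E\subseteq\bar Q^m_{\alpha_0}$.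
   Context: Notation: $\operatorname{dist}(x,A)=\inf_{a\in A}d(x,a)$; closures are taken in $X$. Given points $\{x^k_\alpha\}$ and constants $\delta\in(0,1)$, $0<c_0\le C_0$, a dyadic partial order is a partial order $\le$ on the index pairs $(k,\alpha)$ such that: (a) every $(k+1,\beta)$ satisfies $(k+1,\beta)\le(k,\alpha)$ for exactly one $\alpha$; (b) for $\ell\le k$, $(\ell,\beta)\le(k,\alpha)$ iff $\ell=k$ and $\beta=\alpha$; (c) for $\ell>k$, $(\ell,\beta)\le(k,\alpha)$ iff there exist $\eta_k=\alpha,\eta_{k+1},\dots,\eta_\ell=\beta$ with $(j+1,\eta_{j+1})\le(j,\eta_j)$ for all $j\in\{k,\dots,\ell-1\}$; (d) $d(x^{k+1}_\beta,x^k_\alpha)<\tfrac12c_0\delta^k \Rightarrow (k+1,\beta)\le(k,\alpha)\Rightarrow d(x^{k+1}_\beta,x^k_\alpha)<C_0\delta^k$. A space is geometrically doubling if there is $A_1\in\mathbb{N}$ such that every open ball $B(x,r)=\{y:d(x,y)<r\}$ can be covered by at most $A_1$ open balls of radius $r/2$. *)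

From Stdlib Require Import Reals ZArith List.
Open Scope R_scope.

Definition is_metric {X : Type} (d : X -> X -> R) : Prop :=
  (forall x y, 0 <= d x y) /\
  (forall x y, d x y = 0 <-> x = y) /\
  (forall x y, d x y = d y x) /\
  (forall x y z, d x z <= d x y + d y z).

Definition ball {X : Type} (d : X -> X -> R) (x : X) (r : R) (y : X) : Prop :=
  d x y < r.

Definition geom_doubling {X : Type} (d : X -> X -> R) : Prop :=
  exists A1 : nat, forall (x : X) (r : R),
    exists cs : list X, (length cs <= A1)%nat /\
      forall y, ball d x r y -> exists c, In c cs /\ ball d c (r / 2) y.

Definition closure {X : Type} (d : X -> X -> R) (S : X -> Prop) (y : X) : Prop :=
  forall eps, 0 < eps -> exists z, S z /\ d y z < eps.

(* Chains as in clause (c): a chain from (k,a) to (l,b) is a sequence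
   eta_k = a, eta_{k+1}, ..., eta_l = b with (j+1,eta_{j+1}) <= (j,eta_j). *)
Inductive chain {A : Z -> Type} (le : sigT A -> sigT A -> Prop)
  : forall k : Z, A k -> forall l : Z, A l -> Prop :=
| chain_refl : forall k (a : A k), chain le k a k a
| chain_step : forall k (a : A k) l (b : A l) (c : A (l + 1)%Z),
    chain le k a l b -> le (existT A (l + 1)%Z c) (existT A l b) ->
    chain le k a (l + 1)%Z c.

Definition dyadic_partial_order {X : Type} (d : X -> X -> R) {A : Z -> Type}
  (x : forall k : Z, A k -> X) (delta c0 C0 : R)
  (le : sigT A -> sigT A -> Prop) : Prop :=
  (forall p, le p p) /\
  (forall p q, le p q -> le q p -> p = q) /\
  (forall p q r, le p q -> le q r -> le p r) /\
  (forall k (b : A (k + 1)%Z), exists a : A k,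
      le (existT A (k + 1)%Z b) (existT A k a) /\
      forall a' : A k, le (existT A (k + 1)%Z b) (existT A k a') -> a' = a) /\
  (forall l (b : A l) k (a : A k), (l <= k)%Z ->
      (le (existT A l b) (existT A k a) <-> existT A l b = existT A k a)) /\
  (forall l (b : A l) k (a : A k), (l > k)%Z ->
      (le (existT A l b) (existT A k a) <-> chain le k a l b)) /\
  (forall k (b : A (k + 1)%Z) (a : A k),
      (d (x (k + 1)%Z b) (x k a) < / 2 * c0 * powerRZ delta k ->
         le (existT A (k + 1)%Z b) (existT A k a)) /\
      (le (existT A (k + 1)%Z b) (existT A k a) ->
         d (x (k + 1)%Z b) (x k a) < C0 * powerRZ delta k)).

From Stdlib Require Import Reals ZArith List Lra Lia Classical.
Open Scope R_scope.

(* Two facts about a dyadic partial order drive the argument: every point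
   x^k_a with k >= m has an ancestor g at level m (the chain of parents), and
   the ancestor is close, d(x^k_a, x^m_g) <= B0 delta^m / (1 - delta), by
   summing the geometric series of parent distances.  Moreover, by the
   hypothesis on the order, x^k_a and its ancestor lie on the same side of E.

   - E is inside Qbar_{a0}: a point y of E is approximated at every fine level
     k by some x^k_a in E (hypothesis (2)); its level-m ancestor lies in E,
     hence is a0 by (4), so y lies in the closure of the descendants of a0.
   - Qtilde is inside E: if y is not in E, then at every level k we get
     x^k_a outside E near y, whose ancestor g_k is different from a0.  All the
     x^m_{g_k} lie in a fixed ball around y and are b0 delta^m-separated; in a
     geometrically doubling space such a set is finite, so one g occurs for
     infinitely many k, and then y belongs to Qbar_g, contradicting y in Qtilde. *)

Lemma list_pigeonhole {T : Type} (L : list T) (P : nat -> T -> Prop) :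
  (forall n, exists c, In c L /\ P n c) ->
  exists c, In c L /\ forall N, exists n, (n >= N)%nat /\ P n c.
Proof.
  revert P; induction L as [|c L IH]; intros P HP.
  - destruct (HP 0%nat) as [c [[] _]].
  - destruct (classic (forall N, exists n, (n >= N)%nat /\ P n c)) as [Hc|Hc].
    + exists c; split; [left; reflexivity | exact Hc].
    + apply not_all_ex_not in Hc as [N0 HN0].
      destruct (IH (fun n c' => P (n + N0)%nat c')) as [c' [Hin Hc']].
      * intros n. destruct (HP (n + N0)%nat) as [c'' [[<-|Hin] Hp]].
        -- exfalso; apply HN0; exists (n + N0)%nat; split; [lia | exact Hp].
        -- exists c''; auto.
      * exists c'; split; [right; exact Hin|].
        intros N. destruct (Hc' N) as [n [Hn Hp]].
        exists (n + N0)%nat; split; [lia | exact Hp].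
Qed.

Lemma doubling_refine_cover {X : Type} (d : X -> X -> R) (Hdbl : geom_doubling d)
  (rho : R) (cs : list X) :
  exists cs', forall c z, In c cs -> d c z < rho ->
    exists c', In c' cs' /\ d c' z < rho / 2.
Proof.
  destruct Hdbl as [A1 HA].
  induction cs as [|c cs [cs' Hcs']].
  - exists nil; intros c z [].
  - destruct (HA c rho) as [l [_ Hl]].
    exists (l ++ cs'). intros c0 z [<-|Hin] Hz.
    + destruct (Hl z Hz) as [c' [Hc' Hb]].
      exists c'; split; [apply in_or_app; left; exact Hc' | exact Hb].
    + destruct (Hcs' c0 z Hin Hz) as [c' [Hc' Hb]].
      exists c'; split; [apply in_or_app; right; exact Hc' | exact Hb].
Qed.

Lemma doubling_cover_iter {X : Type} (d : X -> X -> R) (Hdbl : geom_doubling d)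
  (y : X) (r : R) (n : nat) :
  exists cs : list X, forall z, d y z < r ->
    exists c, In c cs /\ d c z < r * (/ 2) ^ n.
Proof.
  induction n as [|n [cs Hcs]].
  - exists (y :: nil). intros z Hz. exists y; split; [left; reflexivity | simpl; lra].
  - destruct (doubling_refine_cover d Hdbl (r * (/ 2) ^ n) cs) as [cs' Hcs'].
    exists cs'. intros z Hz. destruct (Hcs z Hz) as [c [Hc Hb]].
    destruct (Hcs' c z Hc Hb) as [c' [Hc' Hb']].
    exists c'; split; [exact Hc'|].
    replace (r * (/ 2) ^ S n) with (r * (/ 2) ^ n / 2) by (simpl; field).
    exact Hb'.
Qed.

(* Pigeonhole for separated families in a doubling space: if for every n some
   index i with property P n i has its point p i in a fixed ball, and the
   points p i are rho-separated, then one index satisfies P n for arbitrarily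
   large n.  (A bounded separated set in a doubling space is finite.) *)
Lemma doubling_separated_pigeonhole {X I : Type} (d : X -> X -> R)
  (Hmet : is_metric d) (Hdbl : geom_doubling d)
  (p : I -> X) (rho : R) (Hrho : 0 < rho)
  (Hsep : forall i j, i <> j -> d (p i) (p j) >= rho)
  (y : X) (r : R) (P : nat -> I -> Prop) :
  (forall n, exists i, P n i /\ d y (p i) < r) ->
  exists i, forall N, exists n, (n >= N)%nat /\ P n i.
Proof.
  destruct Hmet as [Hd0 [_ [Hsym Htri]]].
  intros HP.
  assert (Hr : 0 < r).
  { destruct (HP 0%nat) as [i [_ Hi]]. pose proof (Hd0 y (p i)). lra. }
  (* choose a level N of the iterated cover whose balls have radius < rho/2 *)
  destruct (pow_lt_1_zero (/ 2)) with (y := rho / 2 / r) as [N HN].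
  { rewrite Rabs_right; lra. }
  { apply Rdiv_lt_0_compat; lra. }
  specialize (HN N (Nat.le_refl _)).
  rewrite Rabs_right in HN by (apply Rle_ge, pow_le; lra).
  assert (Hsmall : r * (/ 2) ^ N < rho / 2).
  { apply (Rmult_lt_compat_l r) in HN; [|exact Hr].
    replace (r * (rho / 2 / r)) with (rho / 2) in HN by (field; lra). exact HN. }
  destruct (doubling_cover_iter d Hdbl y r N) as [cs Hcs].
  destruct (list_pigeonhole cs
              (fun n c => exists i, P n i /\ d c (p i) < r * (/ 2) ^ N))
    as [c [_ Hinf]].
  { intros n. destruct (HP n) as [i [Hi Hyi]].
    destruct (Hcs _ Hyi) as [c [Hc Hci]]. exists c; eauto. }
  (* a small ball around c contains the point of at most one index *)
  destruct (Hinf 0%nat) as [n0 [_ [i0 [_ Hci0]]]].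
  exists i0. intros N'.
  destruct (Hinf N') as [n [Hn [i [Hi Hci]]]].
  assert (i = i0) as ->.
  { apply NNPP; intros Hne. pose proof (Hsep i i0 Hne).
    pose proof (Htri (p i) c (p i0)). rewrite (Hsym (p i) c) in *. lra. }
  exists n; auto.
Qed.

Lemma powerRZ_shift (delta : R) (m : Z) (n : nat) :
  0 < delta -> powerRZ delta (m + Z.of_nat n) = powerRZ delta m * delta ^ n.
Proof.
  intros Hdel. rewrite powerRZ_add by lra. rewrite pow_powerRZ. reflexivity.
Qed.

Lemma powerRZ_antitone (delta : R) (m : Z) (n : nat) :
  0 < delta <= 1 -> powerRZ delta (m + Z.of_nat n) <= powerRZ delta m.
Proof.
  intros Hdel. rewrite powerRZ_shift by lra.
  assert (Hpm : 0 < powerRZ delta m) by (apply powerRZ_lt; lra).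
  assert (Hn : delta ^ n <= 1).
  { rewrite <- (pow1 n). apply pow_incr; lra. }
  nra.
Qed.

Lemma powerRZ_tail_small (delta C : R) (m : Z) :
  0 < delta < 1 -> 0 < C -> forall eps, 0 < eps ->
  exists N : nat, forall n, (n >= N)%nat -> C * powerRZ delta (m + Z.of_nat n) < eps.
Proof.
  intros Hdel HC eps He.
  assert (Hpm : 0 < powerRZ delta m) by (apply powerRZ_lt; lra).
  destruct (pow_lt_1_zero delta) with (y := eps / (C * powerRZ delta m)) as [N HN].
  - rewrite Rabs_right; lra.
  - apply Rdiv_lt_0_compat; [lra | apply Rmult_lt_0_compat; lra].
  - exists N. intros n Hn. specialize (HN n Hn).
    rewrite Rabs_right in HN by (apply Rle_ge, pow_le; lra).
    rewrite powerRZ_shift by lra.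
    apply (Rmult_lt_compat_l (C * powerRZ delta m)) in HN; [|apply Rmult_lt_0_compat; lra].
    replace (C * powerRZ delta m * (eps / (C * powerRZ delta m))) with eps in HN
      by (field; split; lra).
    lra.
Qed.

(* Sum of the geometric tail C0 (delta^k + delta^(k+1) + ...). *)
Definition geom_tail (C0 delta : R) (k : Z) : R := C0 * powerRZ delta k / (1 - delta).

Lemma geom_tail_nonneg (C0 delta : R) (k : Z) :
  0 <= C0 -> 0 < delta < 1 -> 0 <= geom_tail C0 delta k.
Proof.
  intros HC Hdel. unfold geom_tail.
  apply Rmult_le_pos; [apply Rmult_le_pos; [exact HC | apply powerRZ_le; lra]|].
  apply Rlt_le, Rinv_0_lt_compat; lra.
Qed.

(* Every pair (k,a) with k >= m lies below a pair (m,g) of level m, and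
   x^k_a is within the geometric tail from level m to level k of x^m_g:
   follow parents upwards, each step costing less than C0 delta^j. *)
Lemma dyadic_ancestor {X : Type} (d : X -> X -> R) (Hmet : is_metric d)
  {A : Z -> Type} (x : forall k : Z, A k -> X) (delta c0 C0 : R)
  (Hdel : 0 < delta < 1) (le : sigT A -> sigT A -> Prop)
  (Hle : dyadic_partial_order d x delta c0 C0 le) (m k : Z) :
  (m <= k)%Z -> forall a : A k, exists g : A m,
    le (existT A k a) (existT A m g) /\
    d (x k a) (x m g) <= geom_tail C0 delta m - geom_tail C0 delta k.
Proof.
  destruct Hmet as [_ [Hdeq [_ Htri]]].
  destruct Hle as [Hrefl [_ [Htrans [Hparent [_ [_ Hclose]]]]]].
  intros Hk. pattern k. revert k Hk. apply Z.le_ind.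
  - intros u v ->; reflexivity.
  - intros a. exists a; split; [apply Hrefl|].
    rewrite (proj2 (Hdeq _ _) eq_refl). lra.
  - intros k _ IH a. unfold Z.succ in *.
    destruct (Hparent k a) as [par [Hpar _]].
    destruct (IH par) as [g [Hg Hgd]]. exists g; split.
    + eapply Htrans; eauto.
    + pose proof (proj2 (Hclose k a par) Hpar).
      pose proof (Htri (x (k + 1)%Z a) (x k par) (x m g)).
      assert (geom_tail C0 delta k - geom_tail C0 delta (k + 1) = C0 * powerRZ delta k).
      { unfold geom_tail. rewrite powerRZ_add by lra. simpl. field. lra. }
      lra.
Qed.

Definition descendant_points {X : Type} {A : Z -> Type} (x : forall k : Z, A k -> X)
  (le : sigT A -> sigT A -> Prop) (m : Z) (g : A m) (y : X) : Prop :=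
  exists l (b : A l), le (existT A l b) (existT A m g) /\ y = x l b.

Lemma closure_descendants_of_approx {X : Type} (d : X -> X -> R)
  {A : Z -> Type} (x : forall k : Z, A k -> X) (le : sigT A -> sigT A -> Prop)
  (delta C : R) (Hdel : 0 < delta < 1) (HC : 0 < C) (m : Z) (g : A m) (y : X) :
  (forall N, exists n, (n >= N)%nat /\ exists a : A (m + Z.of_nat n)%Z,
      le (existT A _ a) (existT A m g) /\ d y (x _ a) < C * powerRZ delta (m + Z.of_nat n)) ->
  closure d (descendant_points x le m g) y.
Proof.
  intros Happrox eps He.
  destruct (powerRZ_tail_small delta C m Hdel HC eps He) as [N HN].
  destruct (Happrox N) as [n [Hn [a [Ha Hya]]]].
  exists (x _ a). split; [exists (m + Z.of_nat n)%Z, a; auto|].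
  specialize (HN n Hn). lra.
Qed.

Section Lemma3p5.

Variables (X : Type) (d : X -> X -> R) (E : X -> Prop) (m : Z) (b0 B0 delta : R).
Hypothesis Hmet : is_metric d.
Hypothesis Hdbl : geom_doubling d.
Hypothesis Hb0 : 0 < b0.
Hypothesis Hb0B0 : b0 <= B0.
Hypothesis Hdel : 0 < delta < 1.
Variables (A : Z -> Type) (x : forall k : Z, A k -> X).
Hypothesis H1sep : forall k (a b : A k), a <> b -> d (x k a) (x k b) >= b0 * powerRZ delta k.
Variable a0 : A m.
Hypothesis Ha0 : E (x m a0).
Hypothesis Ha0u : forall a : A m, E (x m a) -> a = a0.
Variable le : sigT A -> sigT A -> Prop.
Hypothesis Hle : dyadic_partial_order d x delta b0 B0 le.
Hypothesis Hsame : forall k (a : A k) l (b : A l), (k >= m)%Z ->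
  le (existT A l b) (existT A k a) -> (E (x l b) <-> E (x k a)).

(* E is contained in the closed cube of a0: the fine-level points of E near
   y all descend from a0. *)
Lemma E_sub_cube_a0
  (H2E : forall k, (k >= m)%Z -> forall y, E y ->
     exists a : A k, E (x k a) /\ d y (x k a) < B0 * powerRZ delta k) :
  forall y, E y -> closure d (descendant_points x le m a0) y.
Proof.
  intros y Hy. apply (closure_descendants_of_approx d x le delta B0);
    [exact Hdel | exact (Rlt_le_trans _ _ _ Hb0 Hb0B0) |].
  intros N. exists N; split; [apply Nat.le_refl|].
  destruct (H2E (m + Z.of_nat N)%Z ltac:(lia) y Hy) as [a [HaE Hya]].
  destruct (dyadic_ancestor d Hmet x delta b0 B0 Hdel le Hle m (m + Z.of_nat N)%Z
              ltac:(lia) a) as [g [Hg _]].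
  assert (g = a0) as ->.
  { apply Ha0u. apply (Hsame m g _ a); [lia | exact Hg | exact HaE]. }
  exists a; split; [exact Hg | exact Hya].
Qed.

Lemma not_E_in_other_cube
  (H2Ec : forall k, (k >= m)%Z -> forall y, ~ E y ->
     exists a : A k, ~ E (x k a) /\ d y (x k a) < B0 * powerRZ delta k) :
  forall y, ~ E y -> exists g : A m, g <> a0 /\ closure d (descendant_points x le m g) y.
Proof.
  intros y HnE.
  assert (Hpm : 0 < powerRZ delta m) by (apply powerRZ_lt; lra).
  pose proof (geom_tail_nonneg B0 delta m ltac:(lra) Hdel) as Htail.
  destruct (doubling_separated_pigeonhole d Hmet Hdbl (x m) (b0 * powerRZ delta m)
              ltac:(nra) (H1sep m) y (B0 * powerRZ delta m + geom_tail B0 delta m)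
              (fun n g => g <> a0 /\ exists a : A (m + Z.of_nat n)%Z,
                 le (existT A _ a) (existT A m g) /\
                 d y (x _ a) < B0 * powerRZ delta (m + Z.of_nat n)))
    as [g Hinf].
  { intros n.
    destruct (H2Ec (m + Z.of_nat n)%Z ltac:(lia) y HnE) as [a [HaE Hya]].
    destruct (dyadic_ancestor d Hmet x delta b0 B0 Hdel le Hle m (m + Z.of_nat n)%Z
                ltac:(lia) a) as [g [Hg Hgd]].
    exists g; split; [split; [|exists a; auto]|].
    - intros ->. apply HaE. apply (Hsame m a0 _ a); [lia | exact Hg | exact Ha0].
    - destruct Hmet as [_ [_ [_ Htri]]].
      pose proof (Htri y (x _ a) (x m g)).
      pose proof (geom_tail_nonneg B0 delta (m + Z.of_nat n) ltac:(lra) Hdel).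
      pose proof (powerRZ_antitone delta m n ltac:(lra)).
      assert (B0 * powerRZ delta (m + Z.of_nat n) <= B0 * powerRZ delta m)
        by (apply Rmult_le_compat_l; lra).
      lra. }
  destruct (Hinf 0%nat) as [n0 [_ [Hg _]]].
  exists g; split; [exact Hg|].
  apply (closure_descendants_of_approx d x le delta B0); [exact Hdel | lra |].
  intros N. destruct (Hinf N) as [n [Hn [_ Ha]]]. eauto.
Qed.

End Lemma3p5.

Theorem lemma3p5
  (X : Type) (d : X -> X -> R) (Hmet : is_metric d) (Hdbl : geom_doubling d)
  (E : X -> Prop) (m : Z) (b0 B0 delta : R)
  (Hb0 : 0 < b0) (Hb0B0 : b0 <= B0) (Hdel0 : 0 < delta) (Hdel1 : delta < 1)
  (H12 : 12 * B0 * delta <= b0)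
  (A : Z -> Type) (x : forall k : Z, A k -> X)
  (* (1) *)
  (H1sep : forall k (a b : A k), a <> b -> d (x k a) (x k b) >= b0 * powerRZ delta k)
  (H1cov : forall k (y : X), exists a : A k, d y (x k a) < B0 * powerRZ delta k)
  (* (2) for F = E and F = X \ E *)
  (H2E : forall k, (k >= m)%Z -> forall y, E y ->
      exists a : A k, E (x k a) /\ d y (x k a) < B0 * powerRZ delta k)
  (H2Ec : forall k, (k >= m)%Z -> forall y, ~ E y ->
      exists a : A k, ~ E (x k a) /\ d y (x k a) < B0 * powerRZ delta k)
  (* (3) for F = E and F = X \ E : dist(x^k_a, X \ F) >= b0 delta^k *)
  (H3E : forall k, (k >= m)%Z -> forall a : A k, E (x k a) ->
      forall y, ~ E y -> d (x k a) y >= b0 * powerRZ delta k)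
  (H3Ec : forall k, (k >= m)%Z -> forall a : A k, ~ E (x k a) ->
      forall y, ~ ~ E y -> d (x k a) y >= b0 * powerRZ delta k)
  (* (4) *)
  (a0 : A m) (Ha0 : E (x m a0)) (Ha0u : forall a : A m, E (x m a) -> a = a0)
  (le : sigT A -> sigT A -> Prop)
  (Hle : dyadic_partial_order d x delta b0 B0 le)
  (Hsame : forall k (a : A k) l (b : A l), (k >= m)%Z ->
      le (existT A l b) (existT A k a) -> (E (x l b) <-> E (x k a))) :
  let Qbar := fun (a : A m) =>
    closure d (fun y => exists l (b : A l), le (existT A l b) (existT A m a) /\ y = x l b) in
  let Qtilde := fun y => forall g : A m, g <> a0 -> ~ Qbar g y in
  (forall y, Qtilde y -> E y) /\ (forall y, E y -> Qbar a0 y).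
Proof.
  intros Qbar Qtilde. assert (Hdel : 0 < delta < 1) by lra. split.
  - (* a point of Qtilde outside E would lie in some other closed cube *)
    intros y HQ. apply NNPP; intros HnE.
    destruct (not_E_in_other_cube X d E m b0 B0 delta Hmet Hdbl Hb0 Hb0B0 Hdel A x
                H1sep a0 Ha0 le Hle Hsame H2Ec y HnE) as [g [Hg Hyg]].
    exact (HQ g Hg Hyg).
  - exact (E_sub_cube_a0 X d E m b0 B0 delta Hmet Hb0 Hb0B0 Hdel A x a0 Ha0u
             le Hle Hsame H2E).
Qed.
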